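(* Let $C=(c_{ij})_{1\le i,j\le 6}$ be the Cartan matrix of type $E_6$: $c_{ii}=2$, $c_{ij}=c_{ji}=-1$ for $\{i,j\} \in \{\{1,3\},\{3,4\},\{4,5\},\{5,6\},\{2,4\}\}$, and $c_{ij}=0$ otherwise. Let $e_1,\dots,e_6$ be the standard basis of $\mathbb{Z}^6$, define $s_i \in \mathrm{GL}_6(\mathbb{Z})$ by $s_i(e_j) = e_j - c_{ji} e_i$, let $w = s_1 s_3 s_5 s_6$ and for a prime power $q$ let $T(q) = \mathbb{Z}^6/(q w - \mathrm{id})\mathbb{Z}^6$. Put $N = (q-1)(q^2+q+1) = q^3-1$. Then: if $q \equiv 0$ or $2 \pmod 3$, $T(q) \cong \mathbb{Z}/N \times \mathbb{Z}/N$; if $q \equiv 1 \pmod 3$, $T(q) \cong \mathbb{Z}/3 \times \mathbb{Z}/(N/3) \times \mathbb{Z}/N$ (these being the elementary divisors). In all cases $T(q) \cong \mathbb{Z}/(q-1) \times \mathbb{Z}/(q^2+q+1) \times \mathbb{Z}/N$. *)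

From HB Require Import structures.
From mathcomp Require Import all_boot all_order all_algebra.
Set Implicit Arguments. Unset Strict Implicit. Unset Printing Implicit Defensive.
Import Order.TTheory GRing.Theory Num.Theory.
Local Open Scope ring_scope.

(* Adjacency of the E6 Dynkin diagram, 0-based indices (paper index i <-> i-1):
   edges {1,3},{3,4},{4,5},{5,6},{2,4} become {0,2},{2,3},{3,4},{4,5},{1,3}. *)
Definition e6_edge (i j : nat) : bool :=
  [|| (i == 0%N) && (j == 2%N), (i == 2%N) && (j == 3%N), (i == 3%N) && (j == 4%N),
      (i == 4%N) && (j == 5%N) | (i == 1%N) && (j == 3%N)].

Definition cartanE6 : 'M[int]_6 :=
  \matrix_(i < 6, j < 6)
    (if i == j then 2 else if e6_edge i j || e6_edge j i then -1 else 0).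

(* Simple reflection s_i, acting on column vectors: s_i(e_j) = e_j - c_{ji} e_i,
   i.e. column j of s_i is e_j - c_{ji} e_i. *)
Definition simple_refl (i : 'I_6) : 'M[int]_6 :=
  \matrix_(k < 6, j < 6) ((k == j)%:R - cartanE6 j i * (k == i)%:R).

(* w = s_1 s_3 s_5 s_6 (paper indices), i.e. s_0 s_2 s_4 s_5 in 0-based indices. *)
Definition wE6 : 'M[int]_6 :=
  simple_refl (inord 0) *m simple_refl (inord 2) *m simple_refl (inord 4)
  *m simple_refl (inord 5).

Definition qw_minus_id (q : nat) : 'M[int]_6 := (q%:Z) *: wE6 - 1%:M.

(* [coker_iso M d] : the abelian group Z^n / M Z^n is isomorphic to
   Z/d_0 x ... x Z/d_(m-1): there is a group homomorphism Z^n -> (+)_k Z/d_k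
   (an integer matrix F followed by reduction mod d_k) which is surjective and
   whose kernel is exactly the lattice M Z^n. *)
Definition coker_iso (n : nat) (M : 'M[int]_n) (d : seq nat) : Prop :=
  exists F : 'M[int]_(size d, n),
    (forall y : 'cV[int]_(size d), exists x : 'cV[int]_n,
        forall k : 'I_(size d), ((F *m x) k ord0 == y k ord0 %[mod (nth 0%N d k)%:Z])%Z) /\
    (forall x : 'cV[int]_n,
        (forall k : 'I_(size d), ((nth 0%N d k)%:Z %| (F *m x) k ord0)%Z) <->
        exists z : 'cV[int]_n, x = M *m z).

Definition prime_power (q : nat) : Prop :=
  exists p k : nat, [/\ prime p, (0 < k)%N & q = (p ^ k)%N].

From HB Require Import structures.
From mathcomp Require Import all_boot all_order all_algebra.
From mathcomp Require Import ring zify.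
Set Implicit Arguments. Unset Strict Implicit. Unset Printing Implicit Defensive.
Import Order.TTheory GRing.Theory Num.Theory.
Local Open Scope ring_scope.

(* Three integer functionals on Z^6 (rows of [e6_invariants]) vanish modulo
   q - 1, q^2 + q + 1 and q^3 - 1 exactly on the image of q w - 1, and jointly
   map Z^6 onto Z^3; hence T(q) = Z/(q-1) x Z/(q^2+q+1) x Z/(q^3-1).  A
   unimodular change of coordinates turns Z/a x Z/b into Z/gcd(a,b) x
   Z/lcm(a,b), and gcd(q - 1, q^2 + q + 1) = gcd(q - 1, 3) because
   q^2 + q + 1 = (q + 2)(q - 1) + 3; this gives the two other decompositions. *)

Definition zero_mod n (d : seq nat) (y : 'cV[int]_n) : Prop :=
  forall k : 'I_n, ((nth 0%N d k)%:Z %| y k ord0)%Z.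

Lemma zero_mod0 n d : zero_mod d (0 : 'cV[int]_n).
Proof. by move=> k; rewrite mxE dvdz0. Qed.

Lemma zero_mod_col_mx m n (d1 d2 : seq nat) (y1 : 'cV[int]_m) (y2 : 'cV[int]_n) :
  size d1 = m ->
  zero_mod (d1 ++ d2) (col_mx y1 y2) <-> zero_mod d1 y1 /\ zero_mod d2 y2.
Proof.
move=> sz1; split=> [h | [h1 h2] k].
- split=> k; [have := h (lshift n k) | have := h (rshift m k)].
    by rewrite col_mxEu /= nth_cat sz1 ltn_ord.
  by rewrite col_mxEd /= nth_cat sz1 ltnNge leq_addr /= addKn.
- rewrite -(splitK k); case: (split k) => j /=.
    by rewrite col_mxEu nth_cat sz1 ltn_ord.
  by rewrite col_mxEd nth_cat sz1 ltnNge leq_addr /= addKn.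
Qed.

Lemma coker_isoP n (M : 'M[int]_n) (d : seq nat) :
  coker_iso M d <-> exists F : 'M[int]_(size d, n),
    (forall y, exists x, zero_mod d (F *m x - y)) /\
    (forall x, zero_mod d (F *m x) <-> exists z, x = M *m z).
Proof.
have eqmodE (F : 'M[int]_(size d, n)) (x : 'cV_n) (y : 'cV_(size d)) k :
    ((F *m x) k ord0 == y k ord0 %[mod nth 0%N d k])%Z =
    ((nth 0%N d k)%:Z %| (F *m x - y) k ord0)%Z.
  by rewrite eqz_mod_dvd !mxE.
split=> -[F [surj ker]]; exists F; split=> // y; have [x hx] := surj y.
  by exists x => k; rewrite -eqmodE.
by exists x => k; rewrite eqmodE.
Qed.

Lemma coker_iso_transport n (M : 'M[int]_n) (d d' : seq nat)
    (P : 'M[int]_(size d', size d)) :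
  (forall y : 'cV_(size d), zero_mod d y <-> zero_mod d' (P *m y)) ->
  (forall t : 'cV_(size d'), exists s, P *m s = t) ->
  coker_iso M d -> coker_iso M d'.
Proof.
move=> zeroP surjP /coker_isoP[F [surjF kerF]]; apply/coker_isoP.
exists (P *m F); split=> [t | x]; last by rewrite -mulmxA -zeroP.
have [s <-] := surjP t; have [x hx] := surjF s.
by exists x; rewrite -mulmxA -mulmxBr -zeroP.
Qed.

Lemma coker_iso_drop1 n (M : 'M[int]_n) (d : seq nat) :
  coker_iso M (1%N :: d) -> coker_iso M d.
Proof.
pose P : 'M[int]_(size d, 1 + size d) := row_mx 0 1%:M.
have PE (y : 'cV_(1 + size d)) : P *m y = dsubmx y.
  by rewrite -[y]vsubmxK mul_row_col mul0mx mul1mx add0r col_mxKd.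
apply: (@coker_iso_transport n M (1%N :: d) d P).
- move=> y; rewrite PE -[y](@vsubmxK _ 1 (size d)) col_mxKd.
  apply: iff_trans (zero_mod_col_mx (d1 := [:: 1%N]) d _ _ erefl) _.
  by split=> [[] // | ?]; split=> // k; rewrite ord1 /= dvd1z.
- by move=> t; exists (col_mx (0 : 'cV_1) t); rewrite PE col_mxKd.
Qed.

Definition mx2 (a b c e : int) : 'M[int]_2 :=
  \matrix_(i, j) if i == ord0 then (if j == ord0 then a else b)
                 else (if j == ord0 then c else e).

Lemma sum_ord2 (F : 'I_2 -> int) : \sum_(i < 2) F i = F ord0 + F ord_max.
Proof. by rewrite !big_ord_recl big_ord0 addr0; congr (_ + F _); apply: val_inj. Qed.

Lemma mx2_mulE a b c e (y : 'cV[int]_2) :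
  (mx2 a b c e *m y) ord0 ord0 = a * y ord0 ord0 + b * y ord_max ord0 /\
  (mx2 a b c e *m y) ord_max ord0 = c * y ord0 ord0 + e * y ord_max ord0.
Proof. by rewrite !mxE !sum_ord2 !mxE. Qed.

Lemma mx2_mul a b c e a' b' c' e' :
  mx2 a b c e *m mx2 a' b' c' e' =
  mx2 (a * a' + b * c') (a * b' + b * e') (c * a' + e * c') (c * b' + e * e').
Proof.
apply/matrixP=> i j; rewrite !mxE sum_ord2 !mxE /=.
by case: i j => [[|[|//]] ?] [[|[|//]] ?].
Qed.

Lemma mx2_1 : mx2 1 0 0 1 = 1%:M.
Proof. by apply/matrixP=> -[[|[|//]] ?] [[|[|//]] ?]; rewrite !mxE. Qed.

Lemma zero_mod2 (a b : nat) (y : 'cV[int]_2) :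
  zero_mod [:: a; b] y <-> (a%:Z %| y ord0 ord0)%Z /\ (b%:Z %| y ord_max ord0)%Z.
Proof.
split=> [h | [h0 h1] [[|[|//]] k]]; first by split; [exact: h ord0 | exact: h ord_max].
- by rewrite [Ordinal k](_ : _ = ord0) //; apply: val_inj.
- by rewrite [Ordinal k](_ : _ = ord_max) //; apply: val_inj.
Qed.

Lemma gcd_lcm_unimodular (a b : nat) : (0 < a)%N ->
  exists P Q : 'M[int]_2, P *m Q = 1%:M /\
    forall y, zero_mod [:: a; b] y <-> zero_mod [:: gcdn a b; lcmn a b] (P *m y).
Proof.
(* From u a + v b = g with a = a' g, b = b' g: P = [[u, v], [-b', a']] has
   inverse [[a', -v], [b', u]], and P diag(a, b) = diag(g, l) [[u a', v b'], [-1, 1]]. *)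
move=> a_gt0; set g := gcdn a b.
have g_gt0 : (0 < g)%N by rewrite gcdn_gt0 a_gt0.
have [u [v bezout]] := Bezoutz a b.
set a' := (a %/ g)%N; set b' := (b %/ g)%N.
have aE : a = (a' * g)%N by rewrite divnK ?dvdn_gcdl.
have bE : b = (b' * g)%N by rewrite divnK ?dvdn_gcdr.
have lE : lcmn a b = (a' * b' * g)%N.
  rewrite /lcmn -/g (_ : a * b = a' * b' * g * g)%N ?mulnK //.
  by rewrite {1}aE bE; ring.
have unimod : u * a' + v * b' = 1.
  apply: (@mulIf _ g%:Z); first by rewrite eqz_nat -lt0n.
  by rewrite mul1r -[RHS]bezout aE bE !PoszM; ring.
exists (mx2 u v (- b'%:Z) a'), (mx2 a' (- v) b' u); split.
  by rewrite mx2_mul -mx2_1 -unimod; f_equal; ring.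
move=> y; rewrite !zero_mod2; have [-> ->] := mx2_mulE u v (- b'%:Z) a' y.
rewrite lE aE bE !PoszM; set y0 := y ord0 ord0; set y1 := y ord_max ord0.
split=> [[/dvdzP[s ->] /dvdzP[t ->]] | [/dvdzP[s hs] /dvdzP[t ht]]].
  by split; apply/dvdzP; [exists (u * a' * s + v * b' * t) | exists (t - s)]; ring.
have y0E : y0 = a'%:Z * (s * g) - v * (t * (a'%:Z * b' * g)).
  by rewrite -hs -ht -{1}[y0]mul1r -unimod; ring.
have y1E : y1 = b'%:Z * (s * g) + u * (t * (a'%:Z * b' * g)).
  by rewrite -hs -ht -{1}[y1]mul1r -unimod; ring.
by split; apply/dvdzP; [exists (s - v * t * b') | exists (s + u * t * a')];
  rewrite ?y0E ?y1E; ring.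
Qed.

Lemma coker_iso_gcd_lcm n (M : 'M[int]_n) (a b : nat) (d : seq nat) : (0 < a)%N ->
  coker_iso M [:: a, b & d] -> coker_iso M [:: gcdn a b, lcmn a b & d].
Proof.
move=> a_gt0; have [P2 [Q2 [PQ zeroP2]]] := gcd_lcm_unimodular b a_gt0.
pose P : 'M[int]_(2 + size d) := block_mx P2 0 0 1%:M.
have PE (y1 : 'cV_2) (y2 : 'cV_(size d)) : P *m col_mx y1 y2 = col_mx (P2 *m y1) y2.
  by rewrite mul_block_col !mul0mx mul1mx addr0 add0r.
apply: (@coker_iso_transport n M [:: a, b & d] [:: gcdn a b, lcmn a b & d] P).
- move=> y; rewrite -[y](@vsubmxK _ 2 (size d)) PE.
  apply: iff_trans (zero_mod_col_mx (d1 := [:: a; b]) d _ _ erefl) _.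
  apply: iff_trans _
    (iff_sym (zero_mod_col_mx (d1 := [:: gcdn a b; lcmn a b]) d _ _ erefl)).
  by split=> -[/zeroP2 h1 h2].
- move=> t; have [t1 [t2 ->]] : exists t1 t2, t = col_mx t1 t2 :> 'cV_(2 + size d).
    by exists (usubmx (t : 'cV_(2 + size d))), (dsubmx (t : 'cV_(2 + size d)));
      rewrite vsubmxK.
  by exists (col_mx (Q2 *m t1) t2); rewrite PE mulmxA PQ mul1mx.
Qed.

Definition col6 (x0 x1 x2 x3 x4 x5 : int) : 'cV[int]_6 :=
  \col_(k < 6) [:: x0; x1; x2; x3; x4; x5]`_k.

Lemma col6_inj x0 x1 x2 x3 x4 x5 y0 y1 y2 y3 y4 y5 :
  col6 x0 x1 x2 x3 x4 x5 = col6 y0 y1 y2 y3 y4 y5 ->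
  [:: x0; x1; x2; x3; x4; x5] = [:: y0; y1; y2; y3; y4; y5].
Proof.
move/colP=> e; apply: (@eq_from_nth _ 0) => // i lti.
by have := e (Ordinal lti); rewrite !mxE.
Qed.

Lemma col6_ind (P : 'cV[int]_6 -> Prop) :
  (forall x0 x1 x2 x3 x4 x5, P (col6 x0 x1 x2 x3 x4 x5)) -> forall x, P x.
Proof.
move=> Pcol6 x; set c := fun k => x (inord k) ord0.
suff -> : x = col6 (c 0) (c 1) (c 2) (c 3) (c 4) (c 5) by [].
apply/colP=> -[k ltk]; rewrite mxE /c.
by case: k ltk => [|[|[|[|[|[|//]]]]]] ltk /=; congr (x _ _);
  apply: val_inj; rewrite /= inordK.
Qed.

Lemma simple_refl_col6 :
  [/\ forall x0 x1 x2 x3 x4 x5, simple_refl (inord 0) *m col6 x0 x1 x2 x3 x4 x5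
                                = col6 (x2 - x0) x1 x2 x3 x4 x5,
      forall x0 x1 x2 x3 x4 x5, simple_refl (inord 2) *m col6 x0 x1 x2 x3 x4 x5
                                = col6 x0 x1 (x0 - x2 + x3) x3 x4 x5,
      forall x0 x1 x2 x3 x4 x5, simple_refl (inord 4) *m col6 x0 x1 x2 x3 x4 x5
                                = col6 x0 x1 x2 x3 (x3 - x4 + x5) x5
    & forall x0 x1 x2 x3 x4 x5, simple_refl (inord 5) *m col6 x0 x1 x2 x3 x4 x5
                                = col6 x0 x1 x2 x3 x4 (x4 - x5)].
Proof.
have inordE k (lt_k6 : (k < 6)%N) : inord k = Ordinal lt_k6 := inord_val (Ordinal lt_k6).
rewrite (inordE 0 isT) (inordE 2 isT) (inordE 4 isT) (inordE 5 isT).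
by split=> x0 x1 x2 x3 x4 x5; apply/colP=> -[[|[|[|[|[|[|//]]]]]] ?];
  rewrite !mxE !big_ord_recl big_ord0 !mxE /=; ring.
Qed.

Lemma wE6_col6 z0 z1 z2 z3 z4 z5 :
  wE6 *m col6 z0 z1 z2 z3 z4 z5 = col6 (z3 - z2) z1 (z0 - z2 + z3) z3 (z3 - z5) (z4 - z5).
Proof.
have [s0 s2 s4 s5] := simple_refl_col6.
by rewrite /wE6 -!mulmxA s5 s4 s2 s0; f_equal; ring.
Qed.

Lemma qw_minus_id_col6 (q : nat) z0 z1 z2 z3 z4 z5 : let Q := q%:Z in
  qw_minus_id q *m col6 z0 z1 z2 z3 z4 z5 =
  col6 (Q * (z3 - z2) - z0) ((Q - 1) * z1) (Q * (z0 - z2 + z3) - z2)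
       ((Q - 1) * z3) (Q * (z3 - z5) - z4) (Q * (z4 - z5) - z5).
Proof.
rewrite /qw_minus_id mulmxBl -scalemxAl mul1mx wE6_col6.
by apply/colP=> -[[|[|[|[|[|[|//]]]]]] ?]; rewrite !mxE /=; ring.
Qed.

Definition col3 (y0 y1 y2 : int) : 'cV[int]_3 := \col_(k < 3) [:: y0; y1; y2]`_k.

Lemma col3_ind (P : 'cV[int]_3 -> Prop) :
  (forall y0 y1 y2, P (col3 y0 y1 y2)) -> forall y, P y.
Proof.
move=> Pcol3 y; set c := fun k => y (inord k) ord0.
suff -> : y = col3 (c 0) (c 1) (c 2) by [].
apply/colP=> -[k ltk]; rewrite mxE /c.
by case: k ltk => [|[|[|//]]] ltk /=; congr (y _ _);
  apply: val_inj; rewrite /= inordK.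
Qed.

Lemma zero_mod_col3 (a b c : nat) y0 y1 y2 :
  zero_mod [:: a; b; c] (col3 y0 y1 y2) <->
  [/\ (a%:Z %| y0)%Z, (b%:Z %| y1)%Z & (c%:Z %| y2)%Z].
Proof.
split=> [h | [h0 h1 h2] [[|[|[|//]]] k]]; rewrite ?mxE //.
by split; [have := h ord0 | have := h (lift ord0 ord0) | have := h ord_max]; rewrite mxE.
Qed.

(* With u = Q x0 + x2, on x = (Q w - 1) z one has u = Q (Q + 1) z3 - (Q^2 + Q + 1) z2,
   which makes the last two rows divisible by Q^2 + Q + 1 and (Q - 1)(Q^2 + Q + 1). *)
Definition e6_invariants (Q : int) : 'M[int]_(3, 6) :=
  \matrix_(k < 3, j < 6) (nth [::] [:: [:: 0; 1; 0; 0; 0; 0];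
                                      [:: - (Q + 1) * Q; 0; - (Q + 1); 0; Q; 1];
                                      [:: (Q - 1) * Q; 0; Q - 1; 1; 0; 0]] k)`_j.

Lemma e6_invariants_col6 Q x0 x1 x2 x3 x4 x5 :
  e6_invariants Q *m col6 x0 x1 x2 x3 x4 x5 =
  col3 x1 (Q * x4 + x5 - (Q + 1) * (Q * x0 + x2)) ((Q - 1) * (Q * x0 + x2) + x3).
Proof.
by apply/colP=> -[[|[|[|//]]] ?]; rewrite !mxE !big_ord_recl big_ord0 !mxE /=; ring.
Qed.

Lemma qw_minus_id_rangeP (q : nat) (x : 'cV[int]_6) : (0 < q)%N ->
  (exists z, x = qw_minus_id q *m z) <->
  zero_mod [:: (q - 1)%N; (q ^ 2 + q + 1)%N; (q ^ 3 - 1)%N] (e6_invariants q *m x).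
Proof.
move=> q_gt0; set Q := q%:Z; set D := Q ^+ 2 + Q + 1.
have qE k : ((q ^ k)%N : int) = Q ^+ k by rewrite -natz natrX natz.
have q1E : ((q - 1)%N : int) = Q - 1 by rewrite -subzn.
have DE : ((q ^ 2 + q + 1)%N : int) = D by rewrite !PoszD qE.
have NE : ((q ^ 3 - 1)%N : int) = (Q - 1) * D by rewrite -subzn ?expn_gt0 ?q_gt0 // qE; ring.
move: x; apply: col6_ind => x0 x1 x2 x3 x4 x5.
rewrite e6_invariants_col6 zero_mod_col3 q1E DE NE.
split=> [[z] | [/dvdzP[a x1E] /dvdzP[n hn] /dvdzP[m hm]]].
  move: z; apply: col6_ind => z0 z1 z2 z3 z4 z5.
  rewrite qw_minus_id_col6 => /col6_inj[-> -> -> -> -> ->].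
  by split; apply/dvdzP;
    [exists z1 | exists ((Q + 1) * z2 - Q * z3 - z5) | exists (z3 - z2)]; ring.
set u := Q * x0 + x2.
have x3E : x3 = m * ((Q - 1) * D) - (Q - 1) * u by rewrite -hm /u; ring.
have x5E : x5 = n * D + (Q + 1) * u - Q * x4 by rewrite -hn /u; ring.
pose b := m * D - u; pose p := n + (Q + 1) * m - b.
exists (col6 (Q * (m - b) - (x0 - Q * b)) a (- (m - b)) b (Q * p - (x4 - Q * b)) (- p)).
by rewrite qw_minus_id_col6 x1E x3E x5E /p /b /u /D; f_equal; ring.
Qed.

Lemma coker_iso_qw_minus_id (q : nat) : (0 < q)%N ->
  coker_iso (qw_minus_id q) [:: (q - 1)%N; (q ^ 2 + q + 1)%N; (q ^ 3 - 1)%N].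
Proof.
move=> q_gt0; apply/coker_isoP; exists (e6_invariants q); split=> [y | x].
  move: y; apply: col3_ind => y0 y1 y2; exists (col6 0 y0 0 y2 0 y1).
  rewrite e6_invariants_col6 (_ : col3 _ _ _ = col3 y0 y1 y2) ?subrr.
    exact: zero_mod0.
  by f_equal; ring.
by apply: iff_sym; exact: qw_minus_id_rangeP.
Qed.

Lemma expn3_subn1 q : (q ^ 3 - 1 = (q - 1) * (q ^ 2 + q + 1))%N.
Proof. by case: q => [//|q]; rewrite !expnS expn0 !muln1; lia. Qed.

Lemma gcdn_subn1_cyclotomic3 q : (0 < q)%N ->
  gcdn (q - 1) (q ^ 2 + q + 1) = if (q %% 3 == 1)%N then 3%N else 1%N.
Proof.
move=> q_gt0; have -> : (q ^ 2 + q + 1 = (q + 2) * (q - 1) + 3)%N.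
  by rewrite !expnS expn0 !muln1; nia.
have -> : (q %% 3 == 1)%N = (3 %| q - 1)%N by rewrite -(eqn_mod_dvd 3 q_gt0).
rewrite gcdnMDl; case: ifP => [dvd3 | not_dvd3]; first exact/gcdn_idPr.
by apply/eqP; rewrite -/(coprime _ _) coprime_sym prime_coprime ?not_dvd3.
Qed.

Lemma prime_power_gt1 q : prime_power q -> (1 < q)%N.
Proof. by case=> p [k [p_pr k_gt0 ->]]; rewrite -(expn0 p) ltn_exp2l ?prime_gt1. Qed.

Theorem mainTheorem5 (q : nat) (hq : prime_power q) :
  let N := (q ^ 3 - 1)%N in
  [/\ (q %% 3 != 1)%N -> coker_iso (qw_minus_id q) [:: N; N],
      (q %% 3 == 1)%N -> coker_iso (qw_minus_id q) [:: 3%N; (N %/ 3)%N; N]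
    & coker_iso (qw_minus_id q) [:: (q - 1)%N; (q ^ 2 + q + 1)%N; N]].
Proof.
move=> N; have q_gt1 := prime_power_gt1 hq; have q_gt0 := ltnW q_gt1.
have pres := coker_iso_qw_minus_id q_gt0.
have q1_gt0 : (0 < q - 1)%N by rewrite subn_gt0.
have := coker_iso_gcd_lcm q1_gt0 pres.
rewrite /lcmn gcdn_subn1_cyclotomic3 // -expn3_subn1 -/N.
case: ifP => mod3 pres'; split=> //; rewrite ?mod3 // => _.
by rewrite divn1 in pres'; exact: coker_iso_drop1.
Qed.
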